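(* Let $(S,M)$ be a Coxeter matrix and let $e=\{s_+,s_-\}\subseteq S$ with $m_{s_+,s_-}=3$. Let $(S/e,N)$ be the edge contraction of $(S,M)$ along $e$. Then the assignment \[ s\mapsto s \quad (s\in S\setminus\{s_+,s_-\}),\qquad s_0\mapsto s_+s_-s_+ \] extends to a well-defined group homomorphism $\phi: W_{S/e,N}\to W_{S,M}$, and $\phi$ is injective.
   Context: A Coxeter matrix on a nonempty set $S$ is a symmetric matrix $M=(m_{s,s'})_{s,s'\in S}$ with entries in $\mathbb Z_{\ge 1}\sqcup\{\infty\}$ such that $m_{s,s'}=1$ iff $s=s'$. The Coxeter group $W_{S,M}$ is the group generated by the elements of $S$ subject to the relations $(ss')^{m_{s,s'}}=1$ for all $s,s'$ with $m_{s,s'}\neq\infty$. Edge contraction: let $e=\{s_+,s_-\}\subseteq S$ with $s_+\ne s_-$ and $m_{s_+,s_-}=3$. Let $s_0$ be a new symbol and $S/e=(S\setminus\{s_+,s_-\})\sqcup\{s_0\}$. Define the symmetric matrix $N=(n_{s,s'})_{s,s'\in S/e}$ by $n_{s,s}=1$ for all $s$; $n_{s,s'}=m_{s,s'}$ for distinct $s,s'\in S\setminus\{s_+,s_-\}$; and for $s\in S\setminus\{s_+,s_-\}$: $n_{s,s_0}=n_{s_0,s}=m_{s,s_+}+m_{s,s_-}-2$ if $m_{s,s_+}=2$ or $m_{s,s_-}=2$ (with the convention $\infty+k=\infty$), and $n_{s,s_0}=n_{s_0,s}=\infty$ if both $m_{s,s_+}>2$ and $m_{s,s_-}>2$. Then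 $N$ is a Coxeter matrix, and $(S/e,N)$ is called the edge contraction of $(S,M)$ along $e$. *)

From mathcomp Require Import all_boot.
Set Implicit Arguments. Unset Strict Implicit. Unset Printing Implicit Defensive.

(* Entries of a Coxeter matrix: Some m = m (a positive integer), None = infinity. *)
Definition coxeter_matrix (S : eqType) (M : S -> S -> option nat) : Prop :=
  (forall s s', M s s' = M s' s) /\
  (forall s s', M s s' <> Some 0) /\
  (forall s s', M s s' = Some 1 <-> s = s').

(* Group presentations: words over letters (x, true) = x and (x, false) = x^-1. *)
Definition letter (X : Type) := (X * bool)%type.
Definition inv_letter (X : Type) (x : letter X) : letter X := (x.1, ~~ x.2).

(* Two words are equal in the presented group iff
   they are related by pres_eq. *)
Inductive pres_eq (X : Type) (R : seq (letter X) -> Prop) :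
    seq (letter X) -> seq (letter X) -> Prop :=
| pe_refl w : pres_eq R w w
| pe_sym w w' : pres_eq R w w' -> pres_eq R w' w
| pe_trans w1 w2 w3 : pres_eq R w1 w2 -> pres_eq R w2 w3 -> pres_eq R w1 w3
| pe_free u v x : pres_eq R (u ++ x :: inv_letter x :: v) (u ++ v)
| pe_rel u v r : R r -> pres_eq R (u ++ r ++ v) (u ++ v).

Definition coxeter_rel (S : Type) (M : S -> S -> option nat) (r : seq (letter S)) : Prop :=
  exists s s' m, M s s' = Some m /\ r = flatten (nseq m [:: (s, true); (s', true)]).

Definition cox_eq (S : Type) (M : S -> S -> option nat) :=
  pres_eq (coxeter_rel M).

(* Edge contraction along e = {sp, sm}: S/e = option (S \ {sp, sm}), None = s0. *)
Definition contr_set (S : eqType) (sp sm : S) :=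
  {s : S | (s != sp) && (s != sm)}.
Definition contr_type (S : eqType) (sp sm : S) := option (contr_set sp sm).

Definition contr_entry (a b : option nat) : option nat :=
  if (a == Some 2) || (b == Some 2) then
    match a, b with Some x, Some y => Some (x + y - 2) | _, _ => None end
  else None.

Definition contr_matrix (S : eqType) (M : S -> S -> option nat) (sp sm : S)
    (x y : contr_type sp sm) : option nat :=
  match x, y with
  | Some a, Some b => M (val a) (val b)
  | None, None => Some 1
  | Some a, None => contr_entry (M (val a) sp) (M (val a) sm)
  | None, Some b => contr_entry (M (val b) sp) (M (val b) sm)
  end.

Definition contr_phi_letter (S : eqType) (sp sm : S) (x : letter (contr_type sp sm))
    : seq (letter S) :=
  match x.1 with
  | Some a => [:: (val a, x.2)]
  | None => [:: (sp, x.2); (sm, x.2); (sp, x.2)]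
  end.

Definition contr_phi (S : eqType) (sp sm : S) (w : seq (letter (contr_type sp sm)))
    : seq (letter S) :=
  flatten (map (@contr_phi_letter S sp sm) w).
Arguments contr_phi {S} sp sm w.
Arguments contr_matrix {S} M sp sm x y.

(* The words s |-> s, s0 |-> sp sm sp respect the relations of W_{S/e,N}: every new
   relator is conjugate, by sp or by sm, to a relator (s s')^m of W_{S,M}, using the braid
   relation sp sm sp = sm sp sm and the commutation of s with sp or with sm.

   For injectivity, let W_{S/e,N} act on R^S through phi and the contragredient of the
   geometric representation of W_{S,M}, and attach to s0 the root alpha_sp + alpha_sm.
   The resulting form on the roots of S/e is -cos(pi/n) where n = n_{s,s0} is finite and
   at most -1 otherwise (as cos(pi/m) >= 1/2 for m >= 3).  Tits' argument then applies
   verbatim: if len(w s) > len(w), the positive cone stays nonnegative on w(alpha_s),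
   which makes this action of W_{S/e,N} faithful, hence phi injective. *)

From Stdlib Require Import Reals Lra.
From mathcomp Require Import all_boot zify.
From mathcomp Require Import boolp.
Set Implicit Arguments. Unset Strict Implicit. Unset Printing Implicit Defensive.

Section Presentation.
Variables (X : Type) (R : seq (letter X) -> Prop).

Lemma pres_eq_ctx a b w w' :
  pres_eq R w w' -> pres_eq R (a ++ w ++ b) (a ++ w' ++ b).
Proof.
elim=> {w w'} [w|w w' _ IH|w1 w2 w3 _ IH1 _ IH2|u v x|u v r Hr].
- exact: pe_refl.
- exact: pe_sym.
- exact: pe_trans IH2.
- by have := @pe_free _ R (a ++ u) (v ++ b) x; rewrite -!catA.
- by have := @pe_rel _ R (a ++ u) (v ++ b) r Hr; rewrite -!catA.
Qed.

Definition inv_word (w : seq (letter X)) : seq (letter X) := rev (map (@inv_letter X) w).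

Lemma pres_eq_cancel_inv w : forall a b, pres_eq R (a ++ w ++ inv_word w ++ b) (a ++ b).
Proof.
elim: w => [|x w IH] a b; first exact: pe_refl.
rewrite /inv_word /= rev_cons -/(inv_word w) -cats1 -!catA /=.
have := IH (a ++ [:: x]) (inv_letter x :: b); rewrite -!catA /= => /pe_trans; apply.
exact: pe_free.
Qed.

End Presentation.

Lemma pres_eq_cat (X : Type) (R : seq (letter X) -> Prop) w1 w1' w2 w2' :
  pres_eq R w1 w1' -> pres_eq R w2 w2' -> pres_eq R (w1 ++ w2) (w1' ++ w2').
Proof.
move=> h1 h2; apply: (@pe_trans _ _ _ (w1' ++ w2)).
- exact: (pres_eq_ctx [::] w2 h1).
- by have := pres_eq_ctx w1' [::] h2; rewrite !cats0.
Qed.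

Fixpoint alt (T : Type) (a b : T) (n : nat) : seq T :=
  if n is k.+1 then rcons (alt b a k) b else [::].

Section AlternatingWords.
Variable T : Type.

Lemma size_alt (a b : T) n : size (alt a b n) = n.
Proof. by elim: n a b => //= n IH a b; rewrite size_rcons IH. Qed.

Lemma alt_addn n (a b : T) k :
  alt a b (k + n) = alt (if odd n then b else a) (if odd n then a else b) k ++ alt a b n.
Proof.
elim: n a b => [|n IH] a b; first by rewrite addn0 cats0.
by rewrite addnS /= IH rcons_cat; case: (odd n).
Qed.

Lemma alt_cons (a b : T) n : alt a b n.+1 = (if odd n then a else b) :: alt a b n.
Proof. by have := alt_addn n a b 1; rewrite add1n => ->; case: (odd n). Qed.

Lemma rev_alt n (a b : T) : rev (alt a b n) = if odd n then alt a b n else alt b a n.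
Proof.
elim: n a b => [|n IH] a b //.
by rewrite {1}alt_cons rev_cons IH [odd _.+1]/=; case: (odd n).
Qed.

Lemma alt_double (a b : T) n : alt a b n.*2 = flatten (nseq n [:: a; b]).
Proof.
elim: n => [|n IH] //; rewrite doubleS /= IH -!cats1 -catA.
by elim: n {IH} => //= n ->.
Qed.

End AlternatingWords.

Lemma alt_char (T : eqType) (a b : T) (y : seq T) : a != b ->
  all (fun x => (x == a) || (x == b)) y ->
  (forall y1 y2 x, y <> y1 ++ x :: x :: y2) ->
  (forall y1 x, y = rcons y1 x -> x = b) -> y = alt a b (size y).
Proof.
elim/last_ind: y a b => [|y x IH] a b ab //= y_ab no_sq last_b.
have xb := last_b y x erefl; subst x.
rewrite size_rcons /=; congr rcons.
move: y_ab; rewrite all_rcons => /andP [_ y_ab].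
apply: IH; first by rewrite eq_sym.
- by apply/allP => z /(allP y_ab); rewrite orbC.
- by move=> y1 y2 z Ey; apply: (no_sq y1 (rcons y2 b) z); rewrite Ey rcons_cat.
- move=> y1 z Ey.
  have : (z == a) || (z == b) by move/allP: y_ab; apply; rewrite Ey mem_rcons mem_head.
  case/orP=> /eqP // zb; subst z; exfalso.
  by apply: (no_sq y1 [::] b); rewrite Ey -!cats1 -catA.
Qed.

Definition pword (T : Type) (u : seq T) : seq (letter T) := map (fun x => (x, true)) u.

Definition pcox_eq (T : Type) (N : T -> T -> option nat) (u v : seq T) : Prop :=
  cox_eq N (pword u) (pword v).

Section CoxeterWords.
Variables (T : Type) (N : T -> T -> option nat).
Hypothesis N_refl : forall x, N x x = Some 1.

Lemma cox_eq_rel u v s s' m : N s s' = Some m ->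
  cox_eq N (u ++ flatten (nseq m [:: (s, true); (s', true)]) ++ v) (u ++ v).
Proof. by move=> h; apply: pe_rel; exists s, s', m. Qed.

Lemma cox_eq_letter_pos x b : cox_eq N [:: (x, b)] [:: (x, true)].
Proof.
case: b; first exact: pe_refl.
apply: (@pe_trans _ _ _ [:: (x, false); (x, true); (x, true)]).
- exact/pe_sym/(@cox_eq_rel [:: (x, false)] [::] x x 1 (N_refl x)).
- exact: (@pe_free _ _ [::] [:: (x, true)] (x, false)).
Qed.

Lemma cox_eq_pword w : cox_eq N w (pword (map fst w)).
Proof.
elim: w => [|[x b] w IH] /=; first exact: pe_refl.
exact: (pres_eq_cat (cox_eq_letter_pos x b) IH).
Qed.

Lemma cox_eq_odd_size w w' : cox_eq N w w' -> odd (size w) = odd (size w').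
Proof.
elim=> {w w'} // [w1 w2 w3 _ -> _ -> //|u v x|u v r [s [s' [m [_ ->]]]]].
- by rewrite !size_cat /= !addnS /= negbK.
- by rewrite !size_cat -alt_double size_alt !oddD odd_double.
Qed.

Local Notation peq := (pcox_eq N).

Lemma pcox_eq_refl u : peq u u. Proof. exact: pe_refl. Qed.
Lemma pcox_eq_sym u v : peq u v -> peq v u. Proof. exact: pe_sym. Qed.
Lemma pcox_eq_trans u v w : peq u v -> peq v w -> peq u w. Proof. exact: pe_trans. Qed.
Lemma pcox_eq_cat u u' v v' : peq u u' -> peq v v' -> peq (u ++ v) (u' ++ v').
Proof. by rewrite /pcox_eq /pword !map_cat; apply: pres_eq_cat. Qed.

Lemma pcox_eq_odd_size u v : peq u v -> odd (size u) = odd (size v).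
Proof. by move/cox_eq_odd_size; rewrite !size_map. Qed.

Lemma pcox_eq_power s s' m : N s s' = Some m -> peq (flatten (nseq m [:: s; s'])) [::].
Proof.
move=> h; rewrite /pcox_eq /pword -alt_double.
have -> : map (fun x => (x, true)) (alt s s' m.*2) = flatten (nseq m [:: (s, true); (s', true)]).
  by rewrite alt_double; elim: m {h} => //= m ->.
by have := @cox_eq_rel [::] [::] s s' m h; rewrite cats0.
Qed.

Lemma pcox_eq_sq x : peq [:: x; x] [::].
Proof. exact: (pcox_eq_power (N_refl x)). Qed.

Lemma pcox_eq_cancel u v x : peq (u ++ [:: x; x] ++ v) (u ++ v).
Proof. exact/(pcox_eq_cat (pcox_eq_refl u))/(pcox_eq_cat (pcox_eq_sq x) (pcox_eq_refl v)). Qed.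

Lemma pcox_eq_cancel_r u x : peq (u ++ [:: x; x]) u.
Proof. by have := pcox_eq_cancel u [::] x; rewrite !cats0. Qed.

Lemma pcox_eq_rev_cancel u : peq (rev u ++ u) [::].
Proof.
elim: u => [|x u IH] /=; first exact: pcox_eq_refl.
rewrite rev_cons -cats1 -catA /=.
exact: pcox_eq_trans (pcox_eq_cancel _ _ _) IH.
Qed.

Lemma pcox_eq_cancel_rev u v : peq u ((u ++ rev v) ++ v).
Proof.
rewrite -catA; apply: pcox_eq_sym.
by have := pcox_eq_cat (pcox_eq_refl u) (pcox_eq_rev_cancel v); rewrite cats0.
Qed.

Lemma pcox_eq_alt a b n : N a b = Some n -> peq (alt a b n) (alt b a n).
Proof.
move=> h; have := pcox_eq_power h; rewrite -alt_double -addnn alt_addn.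
set X := alt _ _ n => rel.
have <- : rev X = alt b a n by rewrite /X rev_alt; case: (odd n).
apply/pcox_eq_sym/(@pcox_eq_trans _ (rev X ++ (X ++ alt a b n))).
- by have := pcox_eq_cat (pcox_eq_refl (rev X)) (pcox_eq_sym rel); rewrite cats0.
- by rewrite catA; apply: (pcox_eq_cat (pcox_eq_rev_cancel X) (pcox_eq_refl _)).
Qed.

Lemma pcox_eq_comm a b : N a b = Some 2 -> peq [:: a; b] [:: b; a].
Proof.
move=> ab2; apply/pcox_eq_sym/(@pcox_eq_trans _ ([:: b; a] ++ [:: a; b; a; b])).
  by have := pcox_eq_cat (pcox_eq_refl [:: b; a]) (pcox_eq_sym (pcox_eq_power ab2)); rewrite cats0.
apply: pcox_eq_trans (pcox_eq_cancel [:: b] [:: b; a; b] a) _.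
exact: (pcox_eq_cancel [::] [:: a; b] b).
Qed.

Lemma pcox_eq_power_cong X Y n : peq X Y -> peq (flatten (nseq n X)) (flatten (nseq n Y)).
Proof. by move=> e; elim: n => [|n IH] /=; [apply: pcox_eq_refl | apply: pcox_eq_cat]. Qed.

Lemma pcox_eq_conj_power c z n :
  peq (flatten (nseq n (c :: z ++ [:: c]))) (c :: flatten (nseq n z) ++ [:: c]).
Proof.
elim: n => [|n IH] /=; first exact/pcox_eq_sym/pcox_eq_sq.
apply: pcox_eq_trans (pcox_eq_cat (pcox_eq_refl (c :: z ++ [:: c])) IH) _.
rewrite (_ : _ ++ _ = (c :: z) ++ [:: c; c] ++ (flatten (nseq n z) ++ [:: c])); last first.
  by rewrite /= -!catA.
by apply: pcox_eq_trans (pcox_eq_cancel _ _ _) _; rewrite /= catA; apply: pcox_eq_refl.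
Qed.

Lemma pcox_eq_conj_trivial c z n X : peq (flatten (nseq n z)) [::] ->
  peq X (c :: z ++ [:: c]) -> peq (flatten (nseq n X)) [::].
Proof.
move=> z_triv X_cz.
apply: pcox_eq_trans (pcox_eq_power_cong n X_cz) _.
apply: pcox_eq_trans (pcox_eq_conj_power c z n) _.
apply: pcox_eq_trans (pcox_eq_sq c).
exact: (pcox_eq_cat (pcox_eq_refl [:: c]) (pcox_eq_cat z_triv (pcox_eq_refl [:: c]))).
Qed.

End CoxeterWords.

Section Length.
Variables (T : Type) (N : T -> T -> option nat).
Hypothesis N_refl : forall x, N x x = Some 1.
Local Notation peq := (pcox_eq N).

Lemma cox_len_ex u : exists n, `[< exists v, size v = n /\ peq u v >].
Proof. by exists (size u); apply/asboolP; exists u; split; last exact: pcox_eq_refl. Qed.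

Definition cox_len u := ex_minn (cox_len_ex u).

Lemma cox_len_reduced u : exists v, size v = cox_len u /\ peq u v.
Proof. by rewrite /cox_len; case: ex_minnP => n /asboolP. Qed.

Lemma cox_len_min u v : peq u v -> cox_len u <= size v.
Proof. by rewrite /cox_len; case: ex_minnP => n _ min_n e; apply/min_n/asboolP; exists v. Qed.

Lemma cox_len_size u : cox_len u <= size u.
Proof. exact/cox_len_min/pcox_eq_refl. Qed.

Lemma cox_len_eq u v : peq u v -> cox_len u = cox_len v.
Proof.
move=> e; apply/eqP; rewrite eqn_leq; apply/andP; split.
- have [v' [<- ev]] := cox_len_reduced v; exact/cox_len_min/(pcox_eq_trans e).
- have [u' [<- eu]] := cox_len_reduced u; exact/cox_len_min/(pcox_eq_trans (pcox_eq_sym e)).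
Qed.

Lemma cox_len_cat u v : cox_len (u ++ v) <= cox_len u + cox_len v.
Proof.
have [u' [<- eu]] := cox_len_reduced u; have [v' [<- ev]] := cox_len_reduced v.
by rewrite -size_cat; apply/cox_len_min/pcox_eq_cat.
Qed.

Lemma cox_len_rcons_le u x : cox_len (rcons u x) <= (cox_len u).+1.
Proof. by have := cox_len_cat u [:: x]; have := cox_len_size [:: x]; rewrite cats1 /=; lia. Qed.

Lemma cox_len0 u : cox_len u = 0 -> peq u [::].
Proof. by have [v [sv ev]] := cox_len_reduced u => h; move: sv; rewrite h => /size0nil <-. Qed.

Lemma cox_len_rcons u x :
  cox_len (rcons u x) = (cox_len u).+1 \/ cox_len u = (cox_len (rcons u x)).+1.
Proof.
have le1 := cox_len_rcons_le u x.
have le2 : cox_len u <= (cox_len (rcons u x)).+1.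
  rewrite (cox_len_eq (pcox_eq_sym (pcox_eq_cancel_r N_refl u x))) -cat_rcons cats1.
  exact: cox_len_rcons_le.
have parity : odd (cox_len (rcons u x)) = ~~ odd (cox_len u).
  have [v [<- ev]] := cox_len_reduced u; have [v' [<- ev']] := cox_len_reduced (rcons u x).
  have : peq v' (rcons v x).
    apply: pcox_eq_trans (pcox_eq_sym ev') _; rewrite -!cats1.
    exact: (pcox_eq_cat ev (pcox_eq_refl N [:: x])).
  by move/pcox_eq_odd_size ->; rewrite size_rcons.
have : cox_len (rcons u x) <> cox_len u by move=> e; move: parity; rewrite e; case: odd.
lia.
Qed.

Lemma cox_len_last u n : cox_len u = n.+1 ->
  exists v x, [/\ peq u (rcons v x), size v = n & cox_len v = n].
Proof.
move=> len_u; have [v [sv ev]] := cox_len_reduced u.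
case/lastP: v sv ev => [|v x]; first by rewrite len_u.
rewrite size_rcons len_u => -[sv] ev; exists v, x; split=> //.
have := cox_len_size v; have := cox_len_rcons_le v x.
by rewrite -(cox_len_eq ev) len_u sv; lia.
Qed.

End Length.

Section DihedralSuffix.
Variables (T : eqType) (N : T -> T -> option nat).
Hypotheses (N_refl : forall x, N x x = Some 1) (N_neq0 : forall x y, N x y <> Some 0).
Local Notation peq := (pcox_eq N).
Local Notation len := (cox_len N).

Definition coset_split (s s' : T) (w v y : seq T) : Prop :=
  [/\ peq w (v ++ y), len w = len v + size y & all (fun x => (x == s) || (x == s')) y].

Lemma min_coset_split s s' w v0 y0 : coset_split s s' w v0 y0 ->
  exists v y, [/\ coset_split s s' w v y, len v <= len v0,
                 len v < len (rcons v s) & len v < len (rcons v s')].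
Proof.
move=> split0.
have ex_split : exists m, `[< exists v y, coset_split s s' w v y /\ len v = m >].
  by exists (len v0); apply/asboolP; exists v0, y0.
case: (ex_minnP ex_split) => m /asboolP [v [y [[w_vy len_w y_ss'] <-]]] min_m.
have ascent x : (x == s) || (x == s') -> len v < len (rcons v x).
  move=> x_ss'; case: (cox_len_rcons N_refl v x) => [-> //|len_v].
  suff : len v <= len (rcons v x) by lia.
  apply/min_m/asboolP; exists (rcons v x), (x :: y); split=> //; split.
  - apply: pcox_eq_trans w_vy _; rewrite -cats1 -catA /=.
    exact/pcox_eq_sym/pcox_eq_cancel.
  - by rewrite len_w len_v /= addnS addSn.
  - by rewrite /= x_ss'.
exists v, y; split=> //; last by apply: ascent; rewrite eqxx orbT.
- by apply/min_m/asboolP; exists v0, y0.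
- by apply: ascent; rewrite eqxx.
Qed.

Variables (s s' : T) (w v y : seq T).
Hypotheses (ss' : s != s') (split_w : coset_split s s' w v y)
  (ascent_w : len w < len (rcons w s)).

Lemma coset_split_reduced y' : peq y y' -> size y <= size y'.
Proof.
case: split_w => w_vy len_w _ e.
have : len w <= len v + size y'.
  rewrite (cox_len_eq (pcox_eq_trans w_vy (pcox_eq_cat (pcox_eq_refl N v) e))).
  by apply: leq_trans (cox_len_cat N _ _) _; rewrite leq_add2l cox_len_size.
lia.
Qed.

Lemma coset_split_ascent z : peq (rcons w s) (v ++ z) -> size y < size z.
Proof.
case: split_w => _ len_w _ e.
have := cox_len_eq e; have := cox_len_cat N v z; have := cox_len_size N z; lia.
Qed.

Lemma coset_split_alt : y = alt s s' (size y).
Proof.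
have [w_vy _ y_ss'] := split_w.
apply: alt_char => //.
- move=> y1 y2 x Ey; have := coset_split_reduced; rewrite Ey.
  by move=> /(_ _ (pcox_eq_cancel N_refl y1 y2 x)); rewrite !size_cat /=; lia.
- move=> y1 x Ey.
  have : x \in y by rewrite Ey mem_rcons mem_head.
  move/(allP y_ss')/orP => [] /eqP // xs.
  subst x; exfalso; suff /coset_split_ascent : peq (rcons w s) (v ++ y1).
    by rewrite Ey size_rcons; lia.
  rewrite -cats1; apply: pcox_eq_trans (pcox_eq_cat w_vy (pcox_eq_refl N [:: s])) _.
  by rewrite Ey -!cats1 -!catA /= catA; apply: pcox_eq_cancel_r.
Qed.

(* A longer alternating suffix could be shortened by the braid relation. *)
Lemma coset_split_short : if N s s' is Some m then size y < m else true.
Proof.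
case Em: (N s s') => [m|] //; rewrite ltnNge; apply/negP => m_le.
case: m Em m_le => [/N_neq0 //|m] Em m_le.
have [w_vy _ _] := split_w.
have := alt_addn m.+1 s s' (size y - m.+1); rewrite subnK // -coset_split_alt => Ey.
set P := alt _ _ (size y - m.+1) in Ey.
suff /coset_split_ascent : peq (rcons w s) (v ++ P ++ alt s s' m).
  by rewrite Ey !size_cat !size_alt; lia.
rewrite -cats1; apply: pcox_eq_trans (pcox_eq_cat w_vy (pcox_eq_refl N [:: s])) _.
apply: (@pcox_eq_trans _ N _ ((v ++ P ++ alt s' s m.+1) ++ [:: s])).
  rewrite {1}Ey; apply: pcox_eq_cat (pcox_eq_refl N _).
  exact/(pcox_eq_cat (pcox_eq_refl N v))/(pcox_eq_cat (pcox_eq_refl N P))/pcox_eq_alt.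
by rewrite /= -cats1 -!catA /= !catA; apply: pcox_eq_cancel_r.
Qed.

End DihedralSuffix.

Section LinearRecurrence.
Local Open Scope R_scope.

Fixpoint lin_rec (c a b : R) (j : nat) {struct j} : R :=
  match j with
  | 0 => a
  | 1 => b
  | (k.+1 as j').+1 => c * lin_rec c a b j' - lin_rec c a b k
  end.

Definition cheb (c : R) := lin_rec c 0 1.

Lemma lin_recSS c a b j : lin_rec c a b j.+2 = c * lin_rec c a b j.+1 - lin_rec c a b j.
Proof. by []. Qed.

Lemma lin_rec_shift c a b j : lin_rec c b (c * b - a) j = lin_rec c a b j.+1.
Proof.
suff : lin_rec c b (c * b - a) j = lin_rec c a b j.+1 /\
       lin_rec c b (c * b - a) j.+1 = lin_rec c a b j.+2 by case.
elim: j => [|j [IH1 IH2]]; first by [].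
by split; last by rewrite lin_recSS IH1 IH2 [lin_rec c a b j.+3]lin_recSS.
Qed.

Lemma lin_rec_cheb c a b j : lin_rec c a b j.+1 = b * cheb c j.+1 - a * cheb c j.
Proof.
suff : lin_rec c a b j.+1 = b * cheb c j.+1 - a * cheb c j /\
       lin_rec c a b j.+2 = b * cheb c j.+2 - a * cheb c j.+1 by case.
elim: j => [|j [IH1 IH2]]; first by rewrite /cheb /=; split; ring.
split=> //; rewrite lin_recSS IH1 IH2 /cheb [lin_rec c 0 1 j.+3]lin_recSS.
by rewrite [lin_rec c 0 1 j.+2]lin_recSS; ring.
Qed.

End LinearRecurrence.

Definition dact (T G : Type) (act : T -> G -> G) (u : seq T) (g : G) : G :=
  foldl (fun g r => act r g) g u.

Lemma dact_cat (T G : Type) (act : T -> G -> G) u v g :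
  dact act (u ++ v) g = dact act v (dact act u g).
Proof. exact: foldl_cat. Qed.

(* Tits' argument for an abstract representation: [G] plays the role of the dual of
   the reflection representation and [root t g] is the value of [g] on the root of [t]. *)
Section TitsCriterion.
Variables (T : eqType) (N : T -> T -> option nat).
Hypotheses (N_refl : forall x, N x x = Some 1) (N_neq0 : forall x y, N x y <> Some 0).
Variables (G : Type) (act : T -> G -> G) (root : T -> G -> R) (form : T -> T -> R)
  (cone : G -> Prop).
Local Open Scope R_scope.
Hypotheses
  (act_pcox_eq : forall u v, pcox_eq N u v -> forall g, dact act u g = dact act v g)
  (root_act : forall r t g, root t (act r g) = root t g - 2 * form r t * root r g)
  (form_sym : forall r t, form r t = form t r)
  (form_refl : forall r, form r r = 1)
  (root_cone : forall r g, cone g -> 0 <= root r g)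
  (root_cone_pos : forall r, exists g, cone g /\ 0 < root r g)
  (cheb_form : forall r t j, r != t ->
     (if N r t is Some m then (j <= m)%N else true) -> 0 <= cheb (-2 * form r t) j).
Local Notation len := (cox_len N).

Lemma root_dact_alt k s s' a b g :
  b * root s (dact act (alt s s' k) g) + a * root s' (dact act (alt s s' k) g) =
  lin_rec (-2 * form s s') a b k.+1 * root (if odd k then s' else s) g +
  lin_rec (-2 * form s s') a b k * root (if odd k then s else s') g.
Proof.
elim: k s s' a b => [|k IH] s s' a b //.
rewrite /= /dact foldl_rcons -/(dact _ _ _) !root_act form_refl (form_sym s' s).
set h := dact _ _ g.
have := IH s' s b (-2 * form s s' * b - a); rewrite (form_sym s' s) !lin_rec_shift -/h.
move=> E.
rewrite (_ : _ + _ = (-2 * form s s' * b - a) * root s' h + b * root s h); last by ring.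
by rewrite E; case: (odd k) => /=; ring.
Qed.

Lemma root_dact_alt_nonneg s s' k h : s != s' ->
  (if N s s' is Some m then (k < m)%N else true) ->
  0 <= root s h -> 0 <= root s' h -> 0 <= root s (dact act (alt s s' k) h).
Proof.
move=> ss' k_lt hs hs'.
have := root_dact_alt k s s' 0 1 h; rewrite Rmult_0_l Rplus_0_r Rmult_1_l => ->.
have c1 : 0 <= cheb (-2 * form s s') k.+1 by apply: cheb_form; case: (N s s') k_lt.
have c0 : 0 <= cheb (-2 * form s s') k.
  by apply: cheb_form => //; case: (N s s') k_lt => // m /ltnW.
by apply: Rplus_le_le_0_compat; apply: Rmult_le_pos => //; case: (odd k).
Qed.

Lemma ascent_root_nonneg n w s : (len w <= n)%N -> (len w < len (rcons w s))%N ->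
  forall g, cone g -> 0 <= root s (dact act w g).
Proof.
elim: n w s => [|n IHn] w s len_w ascent g cone_g.
  have w1 : pcox_eq N w [::] by apply: cox_len0; lia.
  by rewrite (act_pcox_eq w1); apply: root_cone.
case: (leqP (len w) n) => [|len_w_gt]; first by move/IHn; apply.
have /cox_len_last [u [s' [w_us' _ len_u]]] : len w = n.+1 by lia.
have ss' : s != s'.
  apply: contraTneq ascent => ->; rewrite -leqNgt.
  have : pcox_eq N (rcons w s') u.
    rewrite -cats1; apply: pcox_eq_trans (pcox_eq_cat w_us' (pcox_eq_refl N [:: s'])) _.
    by rewrite -cats1 -catA; apply: pcox_eq_cancel_r.
  by move/cox_len_eq ->; have := cox_len_size N u; lia.
have split0 : coset_split N s s' w u [:: s'].
  by split; [rewrite cats1 | rewrite len_u /=; lia | rewrite /= eqxx orbT].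
have [v [y [split_w len_v asc_s asc_s']]] := min_coset_split N_refl split0.
have [w_vy _ _] := split_w.
rewrite (act_pcox_eq w_vy) dact_cat (coset_split_alt N_refl ss' split_w ascent).
apply: root_dact_alt_nonneg => //; first exact: coset_split_short split_w ascent.
- by apply: IHn => //; lia.
- by apply: IHn => //; lia.
Qed.

Lemma dact_id_pcox_eq u : (forall g, dact act u g = g) -> pcox_eq N u [::].
Proof.
move=> u_id; case len_u: (len u) => [|k]; first exact: cox_len0.
have [v [r [u_vr _ len_v]]] := cox_len_last len_u.
have [g [cone_g root_g]] := root_cone_pos r.
have act_r_invol h : act r (act r h) = h := act_pcox_eq (pcox_eq_sq N_refl r) h.
have v_g : dact act v g = act r g.
  have := u_id g; rewrite (act_pcox_eq u_vr) /dact foldl_rcons -/(dact _ _ _) => e.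
  by rewrite -{2}e act_r_invol.
have := @ascent_root_nonneg k v r; rewrite len_v -(cox_len_eq u_vr) len_u.
move=> /(_ (leqnn k) (ltnSn k) g cone_g); rewrite v_g root_act form_refl; lra.
Qed.

End TitsCriterion.

Section ChebyshevTrig.
Local Open Scope R_scope.

Lemma cheb_sin th j : sin th <> 0 -> cheb (2 * cos th) j = sin (INR j * th) / sin th.
Proof.
move=> sin_th.
suff : cheb (2 * cos th) j = sin (INR j * th) / sin th /\
       cheb (2 * cos th) j.+1 = sin (INR j.+1 * th) / sin th by case.
elim: j => [|j [IH1 IH2]].
  by rewrite /cheb /= Rmult_0_l sin_0 Rmult_1_l; split; field.
split=> //; rewrite /cheb lin_recSS -!/(cheb _ _) IH1 IH2.
rewrite (_ : INR j.+2 * th = INR j.+1 * th + th); last by rewrite !S_INR; ring.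
rewrite (_ : INR j * th = INR j.+1 * th - th); last by rewrite !S_INR; ring.
by rewrite sin_plus sin_minus; field.
Qed.

Lemma cheb_nonneg_ge2 c j : 2 <= c -> 0 <= cheb c j.
Proof.
move=> c_ge2; suff : 0 <= cheb c j <= cheb c j.+1 by case.
elim: j => [|j [IH1 IH2]]; first by rewrite /cheb /=; lra.
split; first lra.
rewrite /cheb lin_recSS -!/(cheb _ _).
have : 0 <= (c - 2) * cheb c j.+1 by apply: Rmult_le_pos; lra.
lra.
Qed.

Section Angle.
Variable k : nat.
Hypothesis k_ge2 : (2 <= k)%N.

Lemma INR_ge2 : 2 <= INR k.
Proof. by have := le_INR 2 k (ltac:(apply/leP; lia)). Qed.

Lemma angle_bounds : 0 < PI / INR k <= PI / 2.
Proof.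
have := INR_ge2; have := PI_RGT_0 => PI_gt0 k2; split.
- by apply: Rdiv_lt_0_compat; lra.
- by apply: Rmult_le_compat_l; [lra | apply: Rinv_le_contravar; lra].
Qed.

Lemma sin_angle_gt0 : 0 < sin (PI / INR k).
Proof. by have [? ?] := angle_bounds; apply: sin_gt_0 => //; have := PI_RGT_0; lra. Qed.

Lemma INR_mul_angle : INR k * (PI / INR k) = PI.
Proof. by field; have := INR_ge2; lra. Qed.

Local Notation cheb_k := (cheb (2 * cos (PI / INR k))).

Lemma cheb_antiperiod i : cheb_k (i + k) = - cheb_k i.
Proof.
have := sin_angle_gt0 => sin_pos.
rewrite !cheb_sin; try lra.
by rewrite plus_INR Rmult_plus_distr_r INR_mul_angle neg_sin; field; lra.
Qed.

Lemma cheb_pred : cheb_k k.-1 = 1.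
Proof.
have := sin_angle_gt0 => sin_pos.
rewrite cheb_sin; last lra.
rewrite (_ : INR k.-1 * _ = PI - PI / INR k); first by rewrite sin_PI_x; field; lra.
have := INR_mul_angle; rewrite (_ : INR k = INR k.-1 + 1); first lra.
by rewrite -S_INR; congr INR; lia.
Qed.

Lemma lin_rec_antiperiod a b j :
  lin_rec (2 * cos (PI / INR k)) a b (j + k) = - lin_rec (2 * cos (PI / INR k)) a b j.
Proof.
case: j => [|j]; last by rewrite addSn lin_rec_cheb -addSn !cheb_antiperiod lin_rec_cheb; ring.
rewrite add0n -(prednK (_ : (0 < k)%N)); last lia.
rewrite lin_rec_cheb prednK; last lia.
by rewrite -[k]add0n cheb_antiperiod add0n cheb_pred /cheb /=; ring.
Qed.

Lemma lin_rec_period a b j :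
  lin_rec (2 * cos (PI / INR k)) a b (j + k.*2) = lin_rec (2 * cos (PI / INR k)) a b j.
Proof. by rewrite -addnn addnA !lin_rec_antiperiod Ropp_involutive. Qed.

Lemma cheb_angle_nonneg j : (j <= k)%N -> 0 <= cheb_k j.
Proof.
move=> j_le; have := sin_angle_gt0 => sin_pos.
rewrite cheb_sin; last lra.
apply: Rmult_le_pos; last by apply/Rlt_le/Rinv_0_lt_compat.
have [th_pos _] := angle_bounds.
apply: sin_ge_0; first by apply: Rmult_le_pos; [exact: pos_INR | lra].
rewrite -[X in _ <= X]INR_mul_angle; apply: Rmult_le_compat_r; first lra.
exact/le_INR/leP.
Qed.

Lemma cos_angle_ge0 : 0 <= cos (PI / INR k).
Proof. by have [? ?] := angle_bounds; apply: cos_ge_0; lra. Qed.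

End Angle.

Lemma cos_angle_ge_half k : (3 <= k)%N -> 1 / 2 <= cos (PI / INR k).
Proof.
move=> k_ge3; have k3 : 3 <= INR k by have := le_INR 3 k (ltac:(apply/leP; lia)); simpl; lra.
have := PI_RGT_0 => PI_gt0; rewrite -cos_PI3.
have angle_le : PI / INR k <= PI / 3.
  by apply: Rmult_le_compat_l; [lra | apply: Rinv_le_contravar; lra].
have [th_pos _] : 0 < PI / INR k <= PI / 2 by apply: angle_bounds; lia.
case: (Rle_lt_or_eq_dec _ _ angle_le) => [lt|->]; last lra.
by apply/Rlt_le/cos_decreasing_1; lra.
Qed.

End ChebyshevTrig.

Lemma dact_flatten_nseq2 (T G : Type) (act : T -> G -> G) s s' m g :
  dact act (flatten (nseq m [:: s; s'])) g = iter m (fun h => act s' (act s h)) g.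
Proof. by elim: m g => // m IH g; rewrite iterSr -IH. Qed.

Section GeometricRepresentation.
Variables (S : eqType) (M : S -> S -> option nat).
Hypothesis M_cox : coxeter_matrix M.
Local Open Scope R_scope.

Definition cos_entry (o : option nat) : R := if o is Some k then - cos (PI / INR k) else -1.

Definition cox_form (s t : S) : R := cos_entry (M s t).

(* The contragredient of the geometric representation, acting on linear forms
   [f : S -> R] given by their values on the simple roots. *)
Definition cox_refl (s : S) (f : S -> R) : S -> R := fun t => f t - 2 * cox_form s t * f s.

Lemma cox_form_sym s t : cox_form s t = cox_form t s.
Proof. by rewrite /cox_form M_cox.1. Qed.

Lemma cox_form_refl s : cox_form s s = 1.
Proof. by rewrite /cox_form (proj2 (M_cox.2.2 s s) erefl) /= Rdiv_1_r cos_PI; ring. Qed.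

Lemma cox_refl_invol s f : cox_refl s (cox_refl s f) = f.
Proof. by apply: funext => t; rewrite /cox_refl cox_form_refl; ring. Qed.

Section DihedralOrbit.
Variables (s s' : S) (k : nat) (g : S -> R).
Hypotheses (M_ss' : M s s' = Some k) (k_ge2 : (2 <= k)%N).
Local Notation c := (cox_form s s').
Local Notation rho f := (cox_refl s' (cox_refl s f)).

Definition plane_pt (x y : R) : S -> R := fun t => g t + x * cox_form s t + y * cox_form s' t.

Lemma cox_refl_plane_pt x y :
  rho (plane_pt x y) = plane_pt (- x - 2 * g s - 2 * c * y)
                                (- y - 2 * g s' - 2 * c * (- x - 2 * g s - 2 * c * y)).
Proof.
apply: funext => t.
rewrite /cox_refl /plane_pt !cox_form_refl (cox_form_sym s' s); ring.
Qed.

Lemma one_sub_form_sq : 0 < 1 - c * c.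
Proof.
have := sin_angle_gt0 k_ge2; have := sin2_cos2 (PI / INR k).
by rewrite /Rsqr /cox_form M_ss' /cos_entry; nra.
Qed.

(* [rho] acts on the affine plane [plane_pt] by an affine map whose linear part
   has the same recurrence as [cheb], around the fixed point [(xs, ys)]. *)
Let xs := (c * g s' - g s) / (1 - c * c).
Let ys := (c * g s - g s') / (1 - c * c).
Local Notation d := (lin_rec (- 2 * c) (- xs) (- ys)).

Lemma rho_iter_plane_pt j :
  iter j (fun f => rho f) g = plane_pt (xs + d j.*2) (ys + d j.*2.+1).
Proof.
have := one_sub_form_sq => pos.
have xs_fix : g s = - xs - c * ys by rewrite /xs /ys; field; lra.
have ys_fix : g s' = - c * xs - ys by rewrite /xs /ys; field; lra.
elim: j => [|j IH].
  by apply: funext => t; rewrite /plane_pt /=; ring.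
rewrite iterS IH cox_refl_plane_pt doubleS !lin_recSS xs_fix ys_fix.
by congr plane_pt; ring.
Qed.

Lemma rho_iter_braid : iter k (fun f => rho f) g = g.
Proof.
rewrite rho_iter_plane_pt -[k.*2]add0n -addSn.
rewrite (_ : - 2 * c = 2 * cos (PI / INR k)); last by rewrite /cox_form M_ss' /=; ring.
rewrite !lin_rec_period //= !Rplus_opp_r.
by apply: funext => t; rewrite /plane_pt; ring.
Qed.

End DihedralOrbit.

Lemma cox_refl_braid s s' k g :
  M s s' = Some k -> iter k (fun f => cox_refl s' (cox_refl s f)) g = g.
Proof.
case: k => [|[|k]] M_ss'; last exact: rho_iter_braid.
- by have := M_cox.2.1 s s'; rewrite M_ss'.
- by have /(M_cox.2.2 s s') <- := M_ss'; rewrite /= cox_refl_invol.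
Qed.

Lemma dact_cox_refl_pres w w' : cox_eq M w w' ->
  forall f, dact cox_refl (map fst w) f = dact cox_refl (map fst w') f.
Proof.
elim=> {w w'} [//|w w' _ IH f|w1 w2 w3 _ IH1 _ IH2 f|u v x f|u v r [s [s' [m [M_ss' ->]]]] f].
- by rewrite IH.
- by rewrite IH1 IH2.
- by rewrite !map_cat !dact_cat /= cox_refl_invol.
- rewrite !map_cat !dact_cat map_flatten map_nseq /= dact_flatten_nseq2.
  by rewrite (cox_refl_braid _ M_ss').
Qed.

End GeometricRepresentation.

Lemma contr_entry_some x y n : contr_entry x y = Some n ->
  (x = Some 2 /\ y = Some n) \/ (y = Some 2 /\ x = Some n).
Proof.
rewrite /contr_entry; case: ifP => // /orP [] /eqP E; subst.
- by case: y => // y [<-]; left; split => //; congr Some; lia.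
- by case: x => // x [<-]; right; split => //; congr Some; lia.
Qed.

Section ContractedEntry.
Local Open Scope R_scope.

Lemma cos_entry_contr x y :
  x <> Some 0%N -> x <> Some 1%N -> y <> Some 0%N -> y <> Some 1%N ->
  if contr_entry x y is Some n
  then (2 <= n)%N /\ cos_entry x + cos_entry y = cos_entry (Some n)
  else cos_entry x + cos_entry y <= -1.
Proof.
have ge2 m : Some m <> Some 0%N -> Some m <> Some 1%N -> (2 <= m)%N.
  by case: m => [|[|m]].
have cos2 : - cos (PI / INR 2) = 0.
  by rewrite (_ : INR 2 = 2) ?cos_PI2 ?Ropp_0 //; simpl; lra.
rewrite /contr_entry.
case: x => [x|]; case: y => [y|] x0 x1 y0 y1; rewrite ?if_same /=.
- case: ifP => [/orP [] /eqP [] E|/negbT]; subst.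
  + rewrite cos2 Rplus_0_l (_ : (2 + y - 2)%N = y); last lia.
    by split; first apply: ge2.
  + rewrite cos2 Rplus_0_r (_ : (x + 2 - 2)%N = x); last lia.
    by split; first apply: ge2.
  + rewrite negb_or => /andP [x2 y2].
    have x3 : (3 <= x)%N by case: x x0 x1 x2 => [|[|[|x]]].
    have y3 : (3 <= y)%N by case: y y0 y1 y2 => [|[|[|y]]].
    by have := cos_angle_ge_half x3; have := cos_angle_ge_half y3; lra.
- by have := cos_angle_ge0 (ge2 x x0 x1); lra.
- by have := cos_angle_ge0 (ge2 y y0 y1); lra.
- lra.
Qed.

End ContractedEntry.

Section Contraction.
Variables (S : eqType) (M : S -> S -> option nat) (sp sm : S).
Hypotheses (M_cox : coxeter_matrix M) (sp_sm : sp != sm) (M_sp_sm : M sp sm = Some 3).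
Local Notation T := (contr_type sp sm).
Local Notation N := (contr_matrix M sp sm).
Local Notation phi := (contr_phi sp sm).

Lemma coxeter_refl x : M x x = Some 1.
Proof. exact: (proj2 (M_cox.2.2 x x) erefl). Qed.

Lemma coxeter_neq x y : x != y -> M x y <> Some 0 /\ M x y <> Some 1.
Proof. by move=> xy; split; [apply: M_cox.2.1 | move/(M_cox.2.2 x y)/eqP; apply/negP]. Qed.

Lemma contr_set_neq (a : contr_set sp sm) : val a != sp /\ val a != sm.
Proof. by case: a => x /= /andP. Qed.

Lemma contr_matrix_refl x : N x x = Some 1.
Proof. by case: x => [a|] //=; rewrite coxeter_refl. Qed.

Lemma contr_matrix_neq0 x y : N x y <> Some 0.
Proof.
case: x => [a|]; case: y => [b|] //=; first exact: M_cox.2.1.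
all: by move/contr_entry_some => [[_ E]|[_ E]]; apply: M_cox.2.1 E.
Qed.

Definition contr_letter_word (r : T) : seq S := if r is Some a then [:: val a] else [:: sp; sm; sp].
Definition contr_word (u : seq T) : seq S := flatten (map contr_letter_word u).

Lemma contr_word_cat u v : contr_word (u ++ v) = contr_word u ++ contr_word v.
Proof. by rewrite /contr_word map_cat flatten_cat. Qed.

Lemma contr_word_power n u : contr_word (flatten (nseq n u)) = flatten (nseq n (contr_word u)).
Proof. by elim: n => //= n <-; rewrite contr_word_cat. Qed.

Lemma contr_phi_cat w w' : phi (w ++ w') = phi w ++ phi w'.
Proof. by rewrite /contr_phi map_cat flatten_cat. Qed.

Lemma contr_phi_pword u : phi (pword u) = pword (contr_word u).
Proof.
elim: u => //= x u IH; rewrite -cat1s contr_phi_cat IH /pword /contr_word /= map_cat.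
by case: x.
Qed.

Lemma map_fst_contr_phi w : map fst (phi w) = contr_word (map fst w).
Proof.
elim: w => //= x w IH; rewrite -cat1s contr_phi_cat map_cat IH /contr_word /=.
by case: x => [[a|] b].
Qed.

Lemma map_fst_pword (X : Type) (u : seq X) : map fst (pword u) = u.
Proof. by elim: u => //= x u ->. Qed.

Local Notation peqM := (pcox_eq M).

Lemma braid_sp_sm : peqM [:: sp; sm; sp] [:: sm; sp; sm].
Proof. exact/pcox_eq_sym/(pcox_eq_alt coxeter_refl M_sp_sm). Qed.

(* With [m_{s,sp} = 2], [s sp sm sp = sp (s sm) sp]; with [m_{s,sm} = 2],
   [s sp sm sp = s sm sp sm = sm (s sp) sm]. *)
Lemma contr_rel_trivial x y n :
  N x y = Some n -> peqM (flatten (nseq n (contr_word [:: x; y]))) [::].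
Proof.
have comm := pcox_eq_comm coxeter_refl.
have refl := pcox_eq_refl M; have conj := pcox_eq_conj_trivial coxeter_refl.
rewrite /contr_word; case: x => [a|]; case: y => [b|] /= N_xy.
- exact: pcox_eq_power.
- case: (contr_entry_some N_xy) => [[a2 an]|[a2 an]].
  + apply: (conj sp [:: val a; sm] _ _ (pcox_eq_power an)).
    exact: (pcox_eq_cat (comm _ _ a2) (refl [:: sm; sp])).
  + apply: (conj sm [:: val a; sp] _ _ (pcox_eq_power an)).
    apply: pcox_eq_trans (pcox_eq_cat (refl [:: val a]) braid_sp_sm) _.
    exact: (pcox_eq_cat (comm _ _ a2) (refl [:: sp; sm])).
- rewrite !(M_cox.1 (val b)) in N_xy.
  case: (contr_entry_some N_xy) => [[b2 bn]|[b2 bn]].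
  + apply: (conj sp [:: sm; val b] _ _ (pcox_eq_power bn)).
    exact: (pcox_eq_cat (refl [:: sp; sm]) (comm _ _ b2)).
  + apply: (conj sm [:: sp; val b] _ _ (pcox_eq_power bn)).
    apply: pcox_eq_trans (pcox_eq_cat braid_sp_sm (refl [:: val b])) _.
    exact: (pcox_eq_cat (refl [:: sm; sp]) (comm _ _ b2)).
- case: N_xy => <- /=.
  apply: pcox_eq_trans (pcox_eq_cancel coxeter_refl [:: sp; sm] [:: sm; sp] sp) _.
  apply: pcox_eq_trans (pcox_eq_cancel coxeter_refl [:: sp] [:: sp] sm) _.
  exact: pcox_eq_sq coxeter_refl sp.
Qed.

Lemma contr_phi_pres w w' : cox_eq N w w' -> cox_eq M (phi w) (phi w').
Proof.
elim=> {w w'} [w|w w' _|w1 w2 w3 _ IH1 _|u v [[a|] b]|u v r [x [y [n [N_xy ->]]]]].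
- exact: pe_refl.
- exact: pe_sym.
- exact: pe_trans.
- by rewrite !contr_phi_cat /=; apply: pe_free.
- have := pres_eq_cancel_inv (coxeter_rel M) [:: (sp, b); (sm, b); (sp, b)] (phi u) (phi v).
  by rewrite !contr_phi_cat.
- rewrite !contr_phi_cat; apply: (pres_eq_ctx (phi u) (phi v) (w' := [::])).
  have -> : flatten (nseq n [:: (x, true); (y, true)]) = pword (flatten (nseq n [:: x; y])).
    by rewrite /pword map_flatten map_nseq.
  by rewrite contr_phi_pword contr_word_power; apply: contr_rel_trivial.
Qed.

Section ContractedRepresentation.
Local Open Scope R_scope.

Definition contr_root (r : T) (f : S -> R) : R :=
  if r is Some a then f (val a) else f sp + f sm.

Definition contr_form (r t : T) : R :=
  match r, t with
  | Some a, Some b => cox_form M (val a) (val b)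
  | Some a, None | None, Some a => cox_form M (val a) sp + cox_form M (val a) sm
  | None, None => 1
  end.

Definition contr_act (r : T) (f : S -> R) : S -> R := dact (cox_refl M) (contr_letter_word r) f.

Lemma dact_contr_act u f : dact contr_act u f = dact (cox_refl M) (contr_word u) f.
Proof. by elim: u f => //= r u IH f; rewrite IH /contr_word /= dact_cat. Qed.

Lemma dact_contr_act_phi w w' : cox_eq M (phi w) (phi w') ->
  forall f, dact contr_act (map fst w) f = dact contr_act (map fst w') f.
Proof.
move=> e f; rewrite !dact_contr_act -!map_fst_contr_phi.
exact: (dact_cox_refl_pres M_cox e f).
Qed.

Lemma contr_form_sym r t : contr_form r t = contr_form t r.
Proof. by case: r => [a|]; case: t => [b|] //=; rewrite cox_form_sym. Qed.

Lemma contr_form_refl r : contr_form r r = 1.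
Proof. by case: r => [a|] //=; rewrite cox_form_refl. Qed.

Lemma cox_form_sp_sm : cox_form M sp sm = - (1 / 2).
Proof. by rewrite /cox_form M_sp_sm /= (_ : 1 + 1 + 1 = 3) ?cos_PI3 //; ring. Qed.

Lemma contr_root_act r t f :
  contr_root t (contr_act r f) = contr_root t f - 2 * contr_form r t * contr_root r f.
Proof.
have fpp := cox_form_refl M_cox sp; have fmm := cox_form_refl M_cox sm.
have fpm := cox_form_sp_sm; have fmp : cox_form M sm sp = - (1 / 2) by rewrite cox_form_sym.
case: r => [a|]; case: t => [b|]; rewrite /contr_act /= /cox_refl.
- by ring.
- by ring.
- by rewrite fpp fpm fmp !(cox_form_sym M_cox _ (sval b)); field.
- by rewrite fpp fmm fpm fmp; field.
Qed.

Lemma contr_form_entry r t : r != t ->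
  if N r t is Some n then (2 <= n)%N /\ contr_form r t = cos_entry (Some n)
  else contr_form r t <= -1.
Proof.
case: r => [a|]; case: t => [b|] //= rt.
- have /coxeter_neq [ab0 ab1] : val a != val b.
    by apply: contraNneq rt => /val_inj ->.
  rewrite /cox_form; case E: (M _ _) => [k|] //=; last lra.
  by split=> //; case: k E ab0 ab1 => [|[|k]] ->.
- by have [/coxeter_neq [? ?] /coxeter_neq [? ?]] := contr_set_neq a; apply: cos_entry_contr.
- by have [/coxeter_neq [? ?] /coxeter_neq [? ?]] := contr_set_neq b; apply: cos_entry_contr.
Qed.

Lemma cheb_contr_form r t j : r != t ->
  (if N r t is Some m then (j <= m)%N else true) -> 0 <= cheb (-2 * contr_form r t) j.
Proof.
move=> rt; have := contr_form_entry rt.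
case: (N r t) => [n [n2 ->] j_le|form_le _].
- rewrite /= (_ : -2 * - cos _ = 2 * cos (PI / INR n)); last ring.
  exact: cheb_angle_nonneg.
- by apply: cheb_nonneg_ge2; lra.
Qed.

Definition nonneg_form (f : S -> R) : Prop := forall t, 0 <= f t.

Lemma contr_root_nonneg r f : nonneg_form f -> 0 <= contr_root r f.
Proof.
move=> f_ge0; case: r => [a|] /=; first exact: f_ge0.
by have := f_ge0 sp; have := f_ge0 sm; lra.
Qed.

Lemma contr_root_pos r : exists f, nonneg_form f /\ 0 < contr_root r f.
Proof.
pose x := if r is Some a then val a else sp.
exists (fun t => if t == x then 1 else 0); split=> [t|]; first by case: (_ == _); lra.
case: r @x => [a|] x /=; rewrite eqxx //; first lra.
by rewrite eq_sym (negbTE sp_sm); lra.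
Qed.

End ContractedRepresentation.

Lemma contr_phi_inj w w' : cox_eq M (phi w) (phi w') -> cox_eq N w w'.
Proof.
move=> e.
have act_pres u v : pcox_eq N u v -> forall f, dact contr_act u f = dact contr_act v f.
  by move=> uv f; have := dact_contr_act_phi (contr_phi_pres uv) f; rewrite !map_fst_pword.
have faithful := dact_id_pcox_eq contr_matrix_refl contr_matrix_neq0 act_pres contr_root_act
  contr_form_sym contr_form_refl contr_root_nonneg contr_root_pos cheb_contr_form.
set a := map fst w; set b := map fst w'.
have ab_triv : pcox_eq N (a ++ rev b) [::].
  apply: faithful => f; rewrite dact_cat (dact_contr_act_phi e) -dact_cat.
  by have := pcox_eq_rev_cancel contr_matrix_refl (rev b); rewrite revK => /act_pres ->.
have ab : pcox_eq N a b.
  apply: pcox_eq_trans (pcox_eq_cancel_rev contr_matrix_refl a b) _.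
  by have := pcox_eq_cat ab_triv (pcox_eq_refl N b).
apply: pe_trans (cox_eq_pword contr_matrix_refl w) _.
exact: pe_trans ab (pe_sym (cox_eq_pword contr_matrix_refl w')).
Qed.

End Contraction.

Theorem mainTheorem1 (S : eqType) (M : S -> S -> option nat) (sp sm : S) :
  coxeter_matrix M -> sp != sm -> M sp sm = Some 3 ->
  forall w w' : seq (letter (contr_type sp sm)),
    cox_eq (contr_matrix M sp sm) w w' <-> cox_eq M (contr_phi sp sm w) (contr_phi sp sm w').
Proof.
move=> M_cox sp_sm M_sp_sm w w'; split.
- exact: contr_phi_pres.
- exact: contr_phi_inj.
Qed.
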